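(* Let $H$ be a 0-SYM filter such that every solution $z$ of $H(z)=1$ satisfies $\operatorname{Re}(z)>0$. Then: (A) every pole of $H$ in $\mathbb C$ lies on the imaginary axis $i\mathbb R$; (B) every solution $z$ of $H(z)=-1$ satisfies $\operatorname{Re}(z)<0$.
   Context: A 0-SYM filter is a rational function $H(z)$ with real coefficients satisfying $H(z)^2+H(-z)^2=1$ and $H(z)=H(z^{-1})$. *)

From HB Require Import structures.
From mathcomp Require Import all_boot all_order all_algebra.
From mathcomp Require Import complex.
Set Implicit Arguments. Unset Strict Implicit. Unset Printing Implicit Defensive.
Import Order.TTheory GRing.Theory Num.Theory.
Local Open Scope ring_scope.

(* A real rational function H = P/Q (P, Q real polynomials, Q <> 0, written
   in lowest terms, i.e. P and Q coprime), evaluated at complex points. *)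
Definition cpoly (R : rcfType) (p : {poly R}) : {poly R[i]} :=
  map_poly (fun x : R => x%:C%C) p.

Definition Hdef (R : rcfType) (Q : {poly R}) (z : R[i]) : bool :=
  (cpoly Q).[z] != 0.
Definition Hval (R : rcfType) (P Q : {poly R}) (z : R[i]) : R[i] :=
  (cpoly P).[z] / (cpoly Q).[z].

(* H = P/Q is a 0-SYM filter: H(z)^2 + H(-z)^2 = 1 and H(z) = H(1/z), as
   identities of rational functions, i.e. at every point where both sides
   are defined. *)
Definition zero_sym (R : rcfType) (P Q : {poly R}) : Prop :=
  [/\ Q != 0, coprimep P Q,
      (forall z : R[i], Hdef Q z -> Hdef Q (- z) ->
          Hval P Q z ^+ 2 + Hval P Q (- z) ^+ 2 = 1) &
      (forall z : R[i], z != 0 -> Hdef Q z -> Hdef Q z^-1 ->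
          Hval P Q z = Hval P Q z^-1)].

Definition is_pole (R : rcfType) (Q : {poly R}) (z : R[i]) : Prop :=
  (cpoly Q).[z] = 0.

From HB Require Import structures.
From mathcomp Require Import all_boot all_order all_algebra.
From mathcomp Require Import complex ring lra.
Import Order.TTheory GRing.Theory Num.Theory.
Set Implicit Arguments. Unset Strict Implicit. Unset Printing Implicit Defensive.
Local Open Scope ring_scope.

(* Write [H = p/q].  Clearing denominators in [H(z)^2 + H(-z)^2 = 1] and using
   coprimality gives the polynomial identities [q(-z)^2 = q(z)^2] and
   [p(z)^2 + p(-z)^2 = q(z)^2].  The polynomial [d = p - q] has real
   coefficients and, by hypothesis, all its roots in the open right half plane;
   comparing [z] and [-z^*] factor by factor gives [|d(z)| <= |d(-z)|] for
   [Re z >= 0], strictly for [Re z > 0] and [d] nonconstant.  At a pole [w] with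
   [Re w > 0] the identities give [|d(w)| = |d(-w)|]; at a point with [H(z) = -1]
   and [Re z >= 0] they give [|d(z)| = 2|q(z)| > |q(z)| = |d(-z)|]. *)

Section ReflectedPolynomials.
Variable F : numFieldType.
Implicit Types p q g : {poly F}.

Lemma poly_eq0_horner g : (forall x, g.[x] = 0) -> g = 0.
Proof.
move=> g0; apply/eqP; apply: contraT => /max_poly_roots max_roots.
have := max_roots [seq i%:R | i <- iota 0 (size g)].
rewrite size_map size_iota ltnn; apply.
  by apply/allP => x _; rewrite /root g0.
by rewrite map_inj_uniq ?iota_uniq // => m n /eqP; rewrite eqr_nat => /eqP.
Qed.

Lemma horner_compN g x : (g \Po - 'X).[x] = g.[- x].
Proof. by rewrite horner_comp hornerN hornerX. Qed.

Lemma size_compN g : size (g \Po - 'X) = size g.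
Proof. by rewrite size_comp_poly2 // size_polyN size_polyX. Qed.

Lemma lead_coef_compN g : lead_coef (g \Po - 'X) = lead_coef g * (-1) ^+ (size g).-1.
Proof. by rewrite lead_coef_comp ?size_polyN ?size_polyX // lead_coefN lead_coefX. Qed.

Lemma compN_eq0 g : (g \Po - 'X == 0) = (g == 0).
Proof. by rewrite -!size_poly_eq0 size_compN. Qed.

Lemma clear_denoms_sqr_compN p q : q != 0 ->
  (forall x, q.[x] != 0 -> q.[- x] != 0 ->
     (p.[x] / q.[x]) ^+ 2 + (p.[- x] / q.[- x]) ^+ 2 = 1) ->
  p ^+ 2 * (q \Po - 'X) ^+ 2 + (p \Po - 'X) ^+ 2 * q ^+ 2
    = q ^+ 2 * (q \Po - 'X) ^+ 2.
Proof.
move=> q0 sym; apply/eqP; rewrite -subr_eq0; apply/eqP.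
have qqN0 : q * (q \Po - 'X) != 0 by rewrite mulf_neq0 ?compN_eq0.
apply: (mulIf qqN0); rewrite mul0r; apply: poly_eq0_horner => x.
rewrite !(hornerM, hornerD, hornerN, horner_exp) !horner_compN.
have [->|qx] := eqVneq q.[x] 0; first by ring.
have [->|qNx] := eqVneq q.[- x] 0; first by ring.
have := sym x qx qNx; move: (p.[x]) (p.[- x]) => a b sym_x.
have -> : a ^+ 2 * q.[- x] ^+ 2 + b ^+ 2 * q.[x] ^+ 2 - q.[x] ^+ 2 * q.[- x] ^+ 2
    = q.[x] ^+ 2 * q.[- x] ^+ 2 * ((a / q.[x]) ^+ 2 + (b / q.[- x]) ^+ 2 - 1).
  by field; rewrite qx qNx.
by rewrite sym_x subrr !mulr0 mul0r.
Qed.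

(* Coprimality forces [q^2 %| q(-X)^2]; equal sizes and leading coefficients
   (up to the sign [(-1)^deg q], which squaring kills) then give equality. *)
Lemma sqr_compN_eq p q : q != 0 -> coprimep p q ->
  p ^+ 2 * (q \Po - 'X) ^+ 2 + (p \Po - 'X) ^+ 2 * q ^+ 2
    = q ^+ 2 * (q \Po - 'X) ^+ 2 ->
  (q \Po - 'X) ^+ 2 = q ^+ 2.
Proof.
move=> q0 pq_coprime clear_eq.
have q20 : q ^+ 2 != 0 by rewrite expf_neq0.
have qN20 : (q \Po - 'X) ^+ 2 != 0 by rewrite expf_neq0 ?compN_eq0.
have q2_dvd : q ^+ 2 %| (q \Po - 'X) ^+ 2.
  have : q ^+ 2 %| p ^+ 2 * (q \Po - 'X) ^+ 2.
    have -> : p ^+ 2 * (q \Po - 'X) ^+ 2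
        = q ^+ 2 * ((q \Po - 'X) ^+ 2 - (p \Po - 'X) ^+ 2).
      by rewrite mulrBr -clear_eq; ring.
    exact: dvdp_mulIl.
  by rewrite Gauss_dvdpr // coprimep_expl // coprimep_expr // coprimep_sym.
have : q ^+ 2 %= (q \Po - 'X) ^+ 2.
  by rewrite -dvdp_size_eqp // (polySpred q20) (polySpred qN20) !size_exp size_compN.
case/eqpP => -[c1 c2] /andP[c10 c20] /= assoc.
have lead2 : lead_coef ((q \Po - 'X) ^+ 2) = lead_coef (q ^+ 2).
  rewrite !lead_coef_exp lead_coef_compN exprMn -exprM mulnC exprM sqrrN.
  by rewrite !expr1n mulr1.
have c12 : c1 = c2.
  have := congr1 lead_coef assoc; rewrite !lead_coefZ lead2 => /mulIf; apply.
  by rewrite lead_coef_eq0.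
by apply: (scalerI c10); rewrite assoc c12.
Qed.

End ReflectedPolynomials.

Section RightHalfPlane.
Variable R : rcfType.
Local Notation C := R[i].

Lemma norm_eq_of_sqr (a b : C) : a ^+ 2 = b ^+ 2 \/ a ^+ 2 = - b ^+ 2 -> `|a| = `|b|.
Proof.
move=> sq; apply/eqP; rewrite -(eqrXn2 (n := 2)) ?normr_ge0 // -!normrX.
by case: sq => ->; rewrite ?normrN.
Qed.

(* [- z^*] is the mirror image of [z] in the imaginary axis. *)
Lemma dist_le_mirror (z r : C) :
  0 <= complex.Re z -> 0 < complex.Re r -> `|z - r| <= `|- (z^*)%C - r|.
Proof.
move=> z_ge0 r_gt0; rewrite -(ler_pXn2r (n := 2)) ?nnegrE ?normr_ge0 //.
rewrite -!add_Re2_Im2 lecR; move: z r z_ge0 r_gt0 => [a b] [c d] /= a_ge0 c_gt0.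
have : 0 <= a * c by rewrite mulr_ge0 // ltW.
nra.
Qed.

Lemma dist_lt_mirror (z r : C) :
  0 < complex.Re z -> 0 < complex.Re r -> `|z - r| < `|- (z^*)%C - r|.
Proof.
move=> z_gt0 r_gt0; rewrite -(ltr_pXn2r (n := 2)) ?nnegrE ?normr_ge0 //.
rewrite -!add_Re2_Im2 ltcR; move: z r z_gt0 r_gt0 => [a b] [c d] /= a_gt0 c_gt0.
have : 0 < a * c by rewrite mulr_gt0.
nra.
Qed.

Lemma cpoly_hornerJ (p : {poly R}) x : (cpoly p).[(x^*)%C] = ((cpoly p).[x])^*%C.
Proof.
have cpolyJ : cpoly p = map_poly conjc (cpoly p).
  by rewrite /cpoly -map_poly_comp; apply: eq_map_poly => y /=; rewrite oppr0.
by rewrite {1}cpolyJ horner_map.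
Qed.

Section RightHalfPlaneRoots.
Variable d : {poly R}.
Hypothesis d_neq0 : d != 0.
Hypothesis roots_right : forall r, root (cpoly d) r -> 0 < complex.Re r.

Lemma cpoly_factor_right : exists2 rs : seq C,
    cpoly d = lead_coef (cpoly d) *: \prod_(r <- rs) ('X - r%:P)
  & all (fun r => 0 < complex.Re r) rs.
Proof.
have [rs d_fact] := closed_field_poly_normal (cpoly d); exists rs => //.
have lc_neq0 : lead_coef (cpoly d) != 0 by rewrite lead_coef_eq0 map_poly_eq0.
apply/allP => r r_rs; apply: roots_right.
by rewrite d_fact rootZ // root_prod_XsubC.
Qed.

Lemma norm_horner_oppJ z : `|(cpoly d).[- z]| = `|(cpoly d).[- (z^*)%C]|.
Proof.
rewrite -rmorphN cpoly_hornerJ !normc_def.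
by case: ((cpoly d).[- z]) => a b /=; rewrite sqrrN.
Qed.

Lemma norm_horner_le_opp z :
  0 <= complex.Re z -> `|(cpoly d).[z]| <= `|(cpoly d).[- z]|.
Proof.
move=> z_ge0; rewrite norm_horner_oppJ.
have [rs -> /allP rs_right] := cpoly_factor_right.
rewrite !hornerZ !normrM !horner_prod !normr_prod ler_wpM2l // !big_seq.
by apply: ler_prod => r r_rs; rewrite !hornerXsubC normr_ge0 dist_le_mirror // rs_right.
Qed.

Lemma norm_horner_lt_opp z : (1 < size d)%N ->
  0 < complex.Re z -> `|(cpoly d).[z]| < `|(cpoly d).[- z]|.
Proof.
move=> d_nonconst z_gt0; rewrite norm_horner_oppJ.
have [rs d_fact /allP rs_right] := cpoly_factor_right.
have lc_neq0 : lead_coef (cpoly d) != 0 by rewrite lead_coef_eq0 map_poly_eq0.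
have rs_neq0 : rs != [::].
  apply: contraTneq d_nonconst => rs_nil.
  have <- : size (cpoly d) = size d by apply: size_map_poly.
  by rewrite d_fact rs_nil big_nil size_scale ?size_poly1.
rewrite d_fact !hornerZ !normrM !horner_prod !normr_prod ltr_pM2l ?normr_gt0 //.
rewrite !big_seq; apply: ltr_prod => [|r r_rs].
  case: rs rs_neq0 {d_fact rs_right} => // r rs _.
  by apply/hasP; exists r; rewrite ?mem_head.
by rewrite !hornerXsubC normr_ge0 dist_lt_mirror // rs_right.
Qed.

End RightHalfPlaneRoots.
End RightHalfPlane.

Section ZeroSymFilter.
Variables (R : rcfType) (P Q : {poly R}).
Hypotheses (Q_neq0 : Q != 0) (PQ_coprime : coprimep P Q).
Hypothesis sqr_sym : forall z : R[i], Hdef Q z -> Hdef Q (- z) ->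
  Hval P Q z ^+ 2 + Hval P Q (- z) ^+ 2 = 1.
Hypothesis one_right :
  forall z : R[i], Hdef Q z -> Hval P Q z = 1 -> 0 < complex.Re z.

Local Notation p := (cpoly P).
Local Notation q := (cpoly Q).

Lemma cpolyQ_neq0 : q != 0.
Proof. by rewrite map_poly_eq0. Qed.

Lemma pole_not_root x : q.[x] = 0 -> p.[x] != 0.
Proof.
have qp_coprime : coprimep q p by rewrite coprimep_sym coprimep_map.
by move=> qx0; apply: (coprimep_root qp_coprime); rewrite /root qx0.
Qed.

Lemma sqr_compN_cpolyQ : (q \Po - 'X) ^+ 2 = q ^+ 2.
Proof.
apply: (@sqr_compN_eq _ p _ cpolyQ_neq0); first by rewrite coprimep_map.
exact: clear_denoms_sqr_compN cpolyQ_neq0 sqr_sym.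
Qed.

Lemma sqr_cpolyP_compN : p ^+ 2 + (p \Po - 'X) ^+ 2 = q ^+ 2.
Proof.
have q20 : q ^+ 2 != 0 by rewrite expf_neq0 ?cpolyQ_neq0.
apply: (mulIf q20); rewrite mulrDl -{1 3}sqr_compN_cpolyQ.
by rewrite [RHS]mulrC; apply: clear_denoms_sqr_compN cpolyQ_neq0 sqr_sym.
Qed.

Lemma sqr_hornerQ_opp x : q.[- x] ^+ 2 = q.[x] ^+ 2.
Proof.
have := congr1 (horner^~ x) sqr_compN_cpolyQ.
by rewrite !horner_exp horner_compN.
Qed.

Lemma sqr_hornerP_add_opp x : p.[x] ^+ 2 + p.[- x] ^+ 2 = q.[x] ^+ 2.
Proof.
have := congr1 (horner^~ x) sqr_cpolyP_compN.
by rewrite hornerD !horner_exp horner_compN.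
Qed.

Lemma horner_cpolyB x : (cpoly (P - Q)).[x] = p.[x] - q.[x].
Proof.
by rewrite -[cpoly _]/(map_poly (real_complex R) _) raddfB hornerD hornerN.
Qed.

Lemma roots_cpolyB_right r : root (cpoly (P - Q)) r -> 0 < complex.Re r.
Proof.
rewrite /root horner_cpolyB subr_eq0 => /eqP pq_r.
have qr : q.[r] != 0.
  by apply/eqP => qr0; have := pole_not_root qr0; rewrite pq_r qr0 eqxx.
by apply: one_right => //; rewrite /Hval pq_r divff.
Qed.

(* If [P = Q] then [H] would be [1] at [0], which is not a pole. *)
Lemma subPQ_neq0 : P - Q != 0.
Proof.
rewrite subr_eq0; apply/negP => /eqP PQ.
have [q0|q0] := eqVneq q.[0] 0.
  by have := pole_not_root q0; rewrite PQ q0 eqxx.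
have H0 : Hval P Q 0 = 1 by rewrite /Hval PQ divff.
by have := one_right q0 H0; rewrite ltxx.
Qed.

Local Notation d := (cpoly (P - Q)).

Lemma pole_Re_le0 w : q.[w] = 0 -> complex.Re w <= 0.
Proof.
move=> qw0; rewrite leNgt; apply/negP => w_gt0; have pw_neq0 := pole_not_root qw0.
have qNw0 : q.[- w] = 0 by apply/eqP; rewrite -sqrf_eq0 sqr_hornerQ_opp qw0 expr0n.
have dw : d.[w] = p.[w] by rewrite horner_cpolyB qw0 subr0.
have dNw : d.[- w] = p.[- w] by rewrite horner_cpolyB qNw0 subr0.
have pw_sqr : p.[w] ^+ 2 = - p.[- w] ^+ 2.
  by apply/eqP; rewrite -addr_eq0 sqr_hornerP_add_opp qw0 expr0n.
have [d_const|d_nonconst] := leqP (size (P - Q)) 1.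
  have dwNw : d.[w] = d.[- w].
    by rewrite (size1_polyC d_const) /cpoly map_polyC !hornerC.
  move: pw_sqr; rewrite -dw -dNw -dwNw => /eqP.
  rewrite -addr_eq0 -mulr2n mulrn_eq0 /=.
  by rewrite sqrf_eq0 dw (negPf pw_neq0).
have := norm_horner_lt_opp subPQ_neq0 roots_cpolyB_right d_nonconst w_gt0.
by rewrite dw dNw (@norm_eq_of_sqr _ _ _ (or_intror pw_sqr)) ltxx.
Qed.

Lemma pole_Re_eq0 w : q.[w] = 0 -> complex.Re w = 0.
Proof.
move=> qw0; have qNw0 : q.[- w] = 0.
  by apply/eqP; rewrite -sqrf_eq0 sqr_hornerQ_opp qw0 expr0n.
apply/le_anti; rewrite pole_Re_le0 //= -oppr_le0.
by have := pole_Re_le0 qNw0; rewrite raddfN.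
Qed.

Lemma eqN1_Re_lt0 z : q.[z] != 0 -> p.[z] / q.[z] = -1 -> complex.Re z < 0.
Proof.
move=> qz_neq0 Hz_eqN1; rewrite ltNge; apply/negP => z_ge0.
have pz : p.[z] = - q.[z] by rewrite -[p.[z]](divfK qz_neq0) Hz_eqN1 mulN1r.
have pNz : p.[- z] = 0.
  apply/eqP; rewrite -sqrf_eq0; apply/eqP; apply: (addrI (p.[z] ^+ 2)).
  by rewrite addr0 sqr_hornerP_add_opp pz sqrrN.
have := norm_horner_le_opp subPQ_neq0 roots_cpolyB_right z_ge0.
rewrite !horner_cpolyB pz pNz sub0r -opprD !normrN.
rewrite (@norm_eq_of_sqr _ _ _ (or_introl (sqr_hornerQ_opp z))).
rewrite -mulr2n normrMn mulr2n gerDl.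
by rewrite normr_le0 (negPf qz_neq0).
Qed.

End ZeroSymFilter.

Theorem theorem3 (R : rcfType) (P Q : {poly R}) :
  zero_sym P Q ->
  (forall z : R[i], Hdef Q z -> Hval P Q z = 1 -> 0 < complex.Re z) ->
  (forall z : R[i], is_pole Q z -> complex.Re z = 0) /\
  (forall z : R[i], Hdef Q z -> Hval P Q z = -1 -> complex.Re z < 0).
Proof.
move=> [Q_neq0 PQ_coprime sqr_sym _] one_right; split.
  exact: pole_Re_eq0 Q_neq0 PQ_coprime sqr_sym one_right.
exact: eqN1_Re_lt0 Q_neq0 PQ_coprime sqr_sym one_right.
Qed.
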